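(* Let $s\ge 1$, let $1\le p\le\infty$, and let $d^p$ be the $\ell^p$-votewise distance built from any family of maps $d_C:L(C)\times L(C)\to[0,\infty)$ satisfying $d_C(\rho,\rho)=0$ and the triangle inequality. Then $\mathcal R(\mathrm{Unam}^s,d^p)$ is homogeneous: $\mathcal R(\mathrm{Unam}^s,d^p)(E)=\mathcal R(\mathrm{Unam}^s,d^p)(E')$ whenever $E\sim_H E'$.
   Context: Elections: $E=(C,V,\pi)$ with $C$ a finite subset of a countably infinite set $C^*$, $V$ a finite nonempty subset of a countably infinite set $V^*$, $\pi:V\to L(C)$ ($L(C)$ = strict linear orders of $C$, $L_s(C)$ = strict linear orders of $s$ distinct elements of $C$). Homogeneity relation $\sim_H$: same candidate set $C$ and $|\pi^{-1}(\rho)|/|V|=|\pi'^{-1}(\rho)|/|V'|$ for all $\rho\in L(C)$. $\mathrm{Unam}^s$ is the $s$-consensus whose domain consists of the elections with $|C|\ge s$ in which all voters rank the same $s$ candidates, in the same order, in their top $s$ positions, the consensus value being this common $s$-ranking; $\mathrm{Unam}^s_r$ is the set of elections with value $r$. Votewise $\ell^p$ distance: fix an enumeration of $V^*$; for $E=(C,V,\pi),E'=(C,V,\pi')$ with $V=\{v_1<\dots<v_n\}$, $d^p(E,E')=\|(d_C(\pi(v_1),\pi'(v_1)),\dots,d_C(\pi(v_n),\pi'(v_n)))\|_p$, and $d^p(E,E')=\infty$ if the candidate sets or voter sets differ. $d(E,A)=\inf_{F\in A}d(E,F)$ ($\infty$ if $A=\emptyset$); $\mathcal R(\mathcal K,d)(E)$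 is the set of $r\in L_s(C^* )$ with $d(E,\mathcal K_r)=\inf_{r'\in L_s(C^* )}d(E,\mathcal K_{r'})$. *)

From Stdlib Require Import Bool Reals Lra List Permutation Sorted Arith ClassicalEpsilon.
Import ListNotations.
Open Scope R_scope.

(** Candidates C* = nat, voters V* = nat - countably infinite; the fixed
    enumeration of V* is the usual order on nat. *)

(** Extended nonnegative reals [0, +oo] (values of distances), also used for p. *)
Inductive ER : Type := Fin (x : R) | PInf.

Definition ER_le (x y : ER) : Prop :=
  match x, y with
  | Fin a, Fin b => a <= b
  | _, PInf => True
  | PInf, Fin _ => False
  end.

Definition is_glb_ER (S : ER -> Prop) (x : ER) : Prop :=
  (forall y, S y -> ER_le x y) /\
  (forall z, (forall y, S y -> ER_le z y) -> ER_le z x).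

(** infimum (chosen glb; it exists for every set of nonnegative values,
    and the infimum of the empty set is +oo). *)
Definition ER_inf (S : ER -> Prop) : ER :=
  epsilon (inhabits PInf) (fun x => is_glb_ER S x).

(** A finite set of candidates/voters is represented canonically as a
    strictly increasing list. *)
Definition fin_set (C : list nat) : Prop := Sorted lt C.

(** strict linear order of C (ranking, best first) *)
Definition is_ranking (C : list nat) (rho : list nat) : Prop :=
  NoDup rho /\ Permutation rho C.

(** element of L_s over C-star: a strict linear order of s distinct candidates *)
Definition is_srank (s : nat) (r : list nat) : Prop :=
  NoDup r /\ length r = s.

Record election : Type := Election {
  cands : list nat;
  voters : list nat;
  prof : nat -> list nat }.

Definition valid_election (E : election) : Prop :=
  fin_set (cands E) /\ fin_set (voters E) /\ voters E <> [] /\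
  (forall v, In v (voters E) -> is_ranking (cands E) (prof E v)).

Definition list_eqb (a b : list nat) : bool :=
  if list_eq_dec Nat.eq_dec a b then true else false.

Definition count_votes (E : election) (rho : list nat) : nat :=
  length (filter (fun v => list_eqb (prof E v) rho) (voters E)).

Definition homog (E E' : election) : Prop :=
  cands E = cands E' /\
  forall rho, is_ranking (cands E) rho ->
    INR (count_votes E rho) / INR (length (voters E)) =
    INR (count_votes E' rho) / INR (length (voters E')).

Definition Unam (s : nat) (r : list nat) (E : election) : Prop :=
  valid_election E /\ (s <= length (cands E))%nat /\
  forall v, In v (voters E) -> firstn s (prof E v) = r.

(** power x^y for x >= 0 with 0^y = 0 *)
Definition rpow (x y : R) : R := if Rle_dec x 0 then 0 else Rpower x y.

Definition lp_norm (p : ER) (xs : list R) : R :=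
  match p with
  | Fin q => rpow (fold_right Rplus 0 (map (fun x => rpow (Rabs x) q) xs)) (/ q)
  | PInf => fold_right Rmax 0 (map Rabs xs)
  end.

(** family of distances d_C on L(C) *)
Definition dist_family := list nat -> list nat -> list nat -> R.

Definition is_pseudo_dist_family (d : dist_family) : Prop :=
  forall C, fin_set C ->
    (forall a b, is_ranking C a -> is_ranking C b -> 0 <= d C a b) /\
    (forall a, is_ranking C a -> d C a a = 0) /\
    (forall a b c, is_ranking C a -> is_ranking C b -> is_ranking C c ->
        d C a c <= d C a b + d C b c).

Definition votewise (d : dist_family) (p : ER) (E F : election) : ER :=
  if andb (list_eqb (cands E) (cands F)) (list_eqb (voters E) (voters F)) then
    Fin (lp_norm p (map (fun v => d (cands E) (prof E v) (prof F v)) (voters E)))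
  else PInf.

Definition dist_to (D : election -> election -> ER) (E : election)
    (A : election -> Prop) : ER :=
  ER_inf (fun x => exists F, A F /\ x = D E F).

(** R(Unam^s, d)(E) as a predicate on L_s over C-star *)
Definition R_Unam (s : nat) (D : election -> election -> ER) (E : election)
    (r : list nat) : Prop :=
  is_srank s r /\
  dist_to D E (Unam s r) =
  ER_inf (fun x => exists r', is_srank s r' /\ x = dist_to D E (Unam s r')).

From Stdlib Require Import Reals List Lra Lia Permutation.
From Stdlib Require Import ClassicalEpsilon Classical FunctionalExtensionality.
Import ListNotations.
Open Scope R_scope.

(** Each voter can be moved independently to a closest ranking whose top
    segment is [r], so [d(E, Unam^s_r)] is the [l^p] norm of [h (pi v)] over
    the voters, for a function [h] of the ballot alone.  Such a norm sees the
    profile only through the ballot frequencies, up to the factor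
    [(|V'|/|V|)^(1/p)] (or [1] when [p = oo]).  Hence for [E ~_H E'] the map
    [r |-> d(E', Unam^s_r)] is a positive multiple of [r |-> d(E, Unam^s_r)],
    and the two maps have the same minimisers. *)

Local Notation sumR l := (fold_right Rplus 0 l).
Local Notation maxR l := (fold_right Rmax 0 l).

Lemma list_eqb_eq a b : list_eqb a b = true <-> a = b.
Proof. unfold list_eqb; destruct (list_eq_dec Nat.eq_dec a b); split; congruence. Qed.

Lemma list_eqb_refl a : list_eqb a a = true.
Proof. apply list_eqb_eq; reflexivity. Qed.

Lemma ER_le_antisym x y : ER_le x y -> ER_le y x -> x = y.
Proof. destruct x, y; simpl; intros; try contradiction; auto. f_equal; lra. Qed.

Lemma ER_inf_glb S g : is_glb_ER S g -> ER_inf S = g.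
Proof.
  intros Hg. unfold ER_inf.
  destruct (epsilon_spec (inhabits PInf) (is_glb_ER S) (ex_intro _ g Hg)) as [He1 He2].
  destruct Hg as [Hg1 Hg2].
  apply ER_le_antisym; [apply Hg2 | apply He2]; assumption.
Qed.

Lemma is_glb_ER_exists S m : (forall x, S (Fin x) -> m <= x) -> exists g, is_glb_ER S g.
Proof.
  intros Hm.
  destruct (classic (exists a, S (Fin a))) as [[a0 Ha0] | Hfin].
  - assert (Hbound : bound (fun y => S (Fin (- y)))).
    { exists (- m). intros y Hy. apply Hm in Hy. lra. }
    assert (Hne : exists y, S (Fin (- y))).
    { exists (- a0). rewrite Ropp_involutive. exact Ha0. }
    destruct (completeness _ Hbound Hne) as [l [Hub Hlub]].
    exists (Fin (- l)). split.
    + intros [a|] Ha; simpl; auto.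
      assert (- a <= l) by (apply Hub; rewrite Ropp_involutive; exact Ha). lra.
    + intros [b|] Hz; simpl.
      * assert (l <= - b); [|lra].
        apply Hlub. intros y Hy. specialize (Hz _ Hy). simpl in Hz. lra.
      * exact (Hz _ Ha0).
  - exists PInf. split.
    + intros [a|] Ha; simpl; auto. apply Hfin; eauto.
    + intros [b|] _; simpl; auto.
Qed.

Lemma ER_inf_is_glb S m : (forall x, S (Fin x) -> m <= x) -> is_glb_ER S (ER_inf S).
Proof.
  intros Hm. destruct (is_glb_ER_exists S m Hm) as [g Hg].
  rewrite (ER_inf_glb S g Hg). exact Hg.
Qed.

Lemma ER_inf_nonneg S : (forall y, S y -> ER_le (Fin 0) y) -> ER_le (Fin 0) (ER_inf S).
Proof.
  intros H. apply (ER_inf_is_glb S 0); [|exact H].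
  intros x Hx. exact (H _ Hx).
Qed.

Definition ER_scale (c : R) (x : ER) : ER :=
  match x with Fin a => Fin (c * a) | PInf => PInf end.

Lemma ER_scale_le c x y : 0 < c -> ER_le (ER_scale c x) (ER_scale c y) <-> ER_le x y.
Proof.
  intros Hc. destruct x, y; simpl; try tauto. split; intros H.
  - apply Rmult_le_reg_l with c; assumption.
  - apply Rmult_le_compat_l; lra.
Qed.

Lemma ER_scale_inv c x : 0 < c -> ER_scale (/ c) (ER_scale c x) = x.
Proof. intros Hc. destruct x; simpl; auto. f_equal. field. lra. Qed.

Lemma ER_scale_inv_r c x : 0 < c -> ER_scale c (ER_scale (/ c) x) = x.
Proof. intros Hc. destruct x; simpl; auto. f_equal. field. lra. Qed.

Lemma ER_scale_inj c x y : 0 < c -> ER_scale c x = ER_scale c y -> x = y.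
Proof. intros Hc H. rewrite <- (ER_scale_inv c x), <- (ER_scale_inv c y), H; auto. Qed.

Lemma ER_inf_scale {A} (P : A -> Prop) (f : A -> ER) c : 0 < c ->
  (forall a, P a -> ER_le (Fin 0) (f a)) ->
  ER_inf (fun x => exists a, P a /\ x = ER_scale c (f a)) =
  ER_scale c (ER_inf (fun x => exists a, P a /\ x = f a)).
Proof.
  intros Hc Hf. apply ER_inf_glb.
  destruct (ER_inf_is_glb (fun x => exists a, P a /\ x = f a) 0) as [Hlow Hgreat].
  { intros x [a [Ha Hx]]. specialize (Hf a Ha). rewrite <- Hx in Hf. exact Hf. }
  split.
  - intros y [a [Ha ->]]. apply ER_scale_le; auto. apply Hlow. eauto.
  - intros z Hz. rewrite <- (ER_scale_inv_r c z Hc). apply ER_scale_le; auto.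
    apply Hgreat. intros y [a [Ha ->]]. apply (ER_scale_le c); auto.
    rewrite ER_scale_inv_r by exact Hc. apply Hz. eauto.
Qed.

Lemma argmin_ER_scale {A} (P : A -> Prop) (f g : A -> ER) c a : 0 < c ->
  (forall a, P a -> ER_le (Fin 0) (f a)) -> (forall a, g a = ER_scale c (f a)) ->
  f a = ER_inf (fun x => exists a', P a' /\ x = f a') <->
  g a = ER_inf (fun x => exists a', P a' /\ x = g a').
Proof.
  intros Hc Hf Hg.
  replace g with (fun a => ER_scale c (f a)) by (extensionality b; symmetry; apply Hg).
  rewrite ER_inf_scale by assumption.
  split; intros H; [rewrite H; reflexivity | exact (ER_scale_inj c _ _ Hc H)].
Qed.

Lemma rpow_nonneg x y : 0 <= rpow x y.
Proof. unfold rpow, Rpower. destruct (Rle_dec x 0); [lra | left; apply exp_pos]. Qed.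

Lemma rpow_pos x y : 0 < x -> 0 < rpow x y.
Proof. intros Hx. unfold rpow, Rpower. destruct (Rle_dec x 0); [lra | apply exp_pos]. Qed.

Lemma rpow_le x y e : 0 < e -> x <= y -> rpow x e <= rpow y e.
Proof.
  intros He Hxy. destruct (Rle_dec y 0) as [Hy|Hy].
  - unfold rpow. destruct (Rle_dec x 0), (Rle_dec y 0); lra.
  - destruct (Rle_dec x 0) as [Hx|Hx].
    + unfold rpow at 1. destruct (Rle_dec x 0); [apply rpow_nonneg | lra].
    + unfold rpow. destruct (Rle_dec x 0), (Rle_dec y 0); try lra.
      apply Rle_Rpower_l; lra.
Qed.

Lemma rpow_mult k x e : 0 < k -> 0 <= x -> rpow (k * x) e = rpow k e * rpow x e.
Proof.
  intros Hk Hx. destruct (Req_dec x 0) as [->|Hx0].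
  - rewrite Rmult_0_r. unfold rpow at 1 3. destruct (Rle_dec 0 0); [ring | lra].
  - assert (Hkx : 0 < k * x) by (apply Rmult_lt_0_compat; lra).
    unfold rpow. destruct (Rle_dec (k * x) 0), (Rle_dec k 0), (Rle_dec x 0); try lra.
    rewrite Rpower_mult_distr; lra.
Qed.

Lemma sumR_nonneg {A} (f : A -> R) l :
  (forall x, In x l -> 0 <= f x) -> 0 <= sumR (map f l).
Proof.
  induction l as [|a l IH]; simpl; intros H; [lra|].
  pose proof (H a (or_introl eq_refl)). pose proof (IH (fun x Hx => H x (or_intror Hx))). lra.
Qed.

Lemma sumR_le {A} (f g : A -> R) l :
  (forall x, In x l -> f x <= g x) -> sumR (map f l) <= sumR (map g l).
Proof.
  induction l as [|a l IH]; simpl; intros H; [lra|].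
  pose proof (H a (or_introl eq_refl)). pose proof (IH (fun x Hx => H x (or_intror Hx))). lra.
Qed.

Lemma sumR_plus {A} (f g : A -> R) l :
  sumR (map (fun x => f x + g x) l) = sumR (map f l) + sumR (map g l).
Proof. induction l as [|a l IH]; simpl; [ring | rewrite IH; ring]. Qed.

Lemma sumR_scal {A} (f : A -> R) k l :
  sumR (map (fun x => k * f x) l) = k * sumR (map f l).
Proof. induction l as [|a l IH]; simpl; [ring | rewrite IH; ring]. Qed.

Lemma maxR_ub l x : In x l -> x <= maxR l.
Proof.
  induction l as [|a l IH]; simpl; [tauto|]. intros [<-|Hx].
  - apply Rmax_l.
  - eapply Rle_trans; [apply IH, Hx | apply Rmax_r].
Qed.

Lemma maxR_lub l M : 0 <= M -> (forall x, In x l -> x <= M) -> maxR l <= M.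
Proof.
  induction l as [|a l IH]; simpl; intros HM H; [exact HM|].
  apply Rmax_lub; [apply H; left; reflexivity | apply IH; auto].
Qed.

Lemma maxR_nonneg l : 0 <= maxR l.
Proof. induction l as [|a l IH]; simpl; [lra | eapply Rle_trans; [exact IH | apply Rmax_r]]. Qed.

Lemma lp_norm_nonneg p xs : 0 <= lp_norm p xs.
Proof. destruct p; simpl; [apply rpow_nonneg | apply maxR_nonneg]. Qed.

Lemma lp_norm_le p (a b : nat -> R) V : (forall q, p = Fin q -> 0 < q) ->
  (forall v, In v V -> 0 <= a v <= b v) ->
  lp_norm p (map a V) <= lp_norm p (map b V).
Proof.
  intros Hp H. destruct p as [q|]; simpl; rewrite !map_map.
  - specialize (Hp q eq_refl).
    apply rpow_le; [apply Rinv_0_lt_compat, Hp|].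
    apply sumR_le. intros v Hv. specialize (H v Hv).
    apply rpow_le; [exact Hp|]. rewrite !Rabs_right; lra.
  - apply maxR_lub; [apply maxR_nonneg|]. intros x Hx.
    apply in_map_iff in Hx as [v [<- Hv]].
    eapply Rle_trans; [|apply maxR_ub, in_map, Hv].
    specialize (H v Hv). rewrite !Rabs_right; lra.
Qed.

Definition indicator (x y : list nat) : R := if list_eqb x y then 1 else 0.

Lemma sumR_indicator (H : list nat -> R) x L : NoDup L -> In x L ->
  sumR (map (fun r => indicator x r * H r) L) = H x.
Proof.
  induction L as [|a L IH]; intros Hnd Hx; [contradiction|].
  apply NoDup_cons_iff in Hnd as [Ha Hnd]. simpl.
  unfold indicator at 1. destruct (list_eqb x a) eqn:Exa.
  - apply list_eqb_eq in Exa. subst a.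
    rewrite (map_ext_in _ (fun r => 0 * H r)), sumR_scal; [ring|].
    intros r Hr. unfold indicator. destruct (list_eqb x r) eqn:Exr; [|reflexivity].
    apply list_eqb_eq in Exr. subst r. contradiction.
  - destruct Hx as [->|Hx]; [rewrite list_eqb_refl in Exa; discriminate|].
    rewrite IH by assumption. ring.
Qed.

Definition ballot_count (f : nat -> list nat) (V : list nat) (r : list nat) : nat :=
  length (filter (fun v => list_eqb (f v) r) V).

Lemma ballot_count_cons f v V r :
  INR (ballot_count f (v :: V) r) = indicator (f v) r + INR (ballot_count f V r).
Proof.
  unfold ballot_count, indicator; simpl.
  destruct (list_eqb (f v) r); simpl length; [rewrite S_INR|]; ring.
Qed.

Lemma sumR_by_ballot_counts (H : list nat -> R) f V L : NoDup L ->
  (forall v, In v V -> In (f v) L) ->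
  sumR (map (fun v => H (f v)) V) = sumR (map (fun r => INR (ballot_count f V r) * H r) L).
Proof.
  intros Hnd. induction V as [|v V IH]; intros HV.
  - simpl. rewrite sumR_scal. ring.
  - cbn [map fold_right]. rewrite IH by (intros; apply HV; right; assumption).
    rewrite (map_ext (fun r => INR (ballot_count f (v :: V) r) * H r)
               (fun r => indicator (f v) r * H r + INR (ballot_count f V r) * H r))
      by (intros r; rewrite ballot_count_cons; ring).
    rewrite sumR_plus, sumR_indicator by (auto using in_eq). reflexivity.
Qed.

Lemma count_votes_pos E rho :
  (0 < count_votes E rho)%nat <-> exists v, In v (voters E) /\ prof E v = rho.
Proof.
  unfold count_votes. split.
  - destruct (filter _ _) as [|w l] eqn:Ef; simpl; [lia|]. intros _.
    assert (Hw : In w (filter (fun v => list_eqb (prof E v) rho) (voters E)))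
      by (rewrite Ef; left; reflexivity).
    apply filter_In in Hw as [Hw Hr]. apply list_eqb_eq in Hr. eauto.
  - intros [v [Hv Hr]].
    assert (Hin : In v (filter (fun v => list_eqb (prof E v) rho) (voters E)))
      by (apply filter_In; split; [exact Hv | apply list_eqb_eq, Hr]).
    destruct (filter _ _); simpl; [contradiction | lia].
Qed.

Lemma voters_length_pos E : valid_election E -> 0 < INR (length (voters E)).
Proof. intros (_ & _ & Hn & _). apply lt_0_INR. destruct (voters E); simpl; [congruence | lia]. Qed.

Lemma homog_sym E E' : homog E E' -> homog E' E.
Proof. intros [Hc Hr]. split; [auto|]. intros rho H. rewrite <- Hc in H. symmetry; auto. Qed.

Lemma homog_ballot_cast E E' v : valid_election E -> valid_election E' -> homog E E' ->
  In v (voters E) -> exists v', In v' (voters E') /\ prof E' v' = prof E v.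
Proof.
  intros hE hE' [_ Hfreq] Hv. apply count_votes_pos.
  assert (Hrk : is_ranking (cands E) (prof E v)) by (apply hE, Hv).
  assert (Hpos : (0 < count_votes E (prof E v))%nat) by (apply count_votes_pos; eauto).
  apply lt_0_INR in Hpos.
  pose proof (voters_length_pos E hE) as Hn. pose proof (voters_length_pos E' hE') as Hn'.
  assert (Hratio : 0 < INR (count_votes E' (prof E v)) / INR (length (voters E'))).
  { rewrite <- (Hfreq _ Hrk). apply Rdiv_lt_0_compat; assumption. }
  apply INR_lt. simpl.
  replace (INR (count_votes E' (prof E v)))
    with (INR (count_votes E' (prof E v)) / INR (length (voters E')) * INR (length (voters E')))
    by (field; lra).
  apply Rmult_lt_0_compat; assumption.
Qed.

Lemma sumR_ballots_homog (H : list nat -> R) E E' :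
  valid_election E -> valid_election E' -> homog E E' ->
  sumR (map (fun v => H (prof E' v)) (voters E')) =
  INR (length (voters E')) / INR (length (voters E)) *
  sumR (map (fun v => H (prof E v)) (voters E)).
Proof.
  intros hE hE' [Hc Hfreq].
  set (L := nodup (list_eq_dec Nat.eq_dec)
              (map (prof E) (voters E) ++ map (prof E') (voters E'))).
  assert (HL : NoDup L) by apply NoDup_nodup.
  rewrite (sumR_by_ballot_counts H (prof E') (voters E') L HL),
          (sumR_by_ballot_counts H (prof E) (voters E) L HL), <- sumR_scal.
  2, 3: intros v Hv; apply nodup_In, in_or_app; auto using in_map.
  apply f_equal, map_ext_in. intros r Hr.
  assert (Hrk : is_ranking (cands E) r).
  { apply nodup_In, in_app_or in Hr as [Hr|Hr]; apply in_map_iff in Hr as [v [<- Hv]].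
    - apply hE, Hv.
    - rewrite Hc. apply hE', Hv. }
  specialize (Hfreq r Hrk). unfold count_votes in Hfreq.
  fold (ballot_count (prof E) (voters E) r) (ballot_count (prof E') (voters E') r) in Hfreq.
  pose proof (voters_length_pos E hE). pose proof (voters_length_pos E' hE').
  assert (Hcount : INR (ballot_count (prof E') (voters E') r) =
    INR (length (voters E')) / INR (length (voters E)) * INR (ballot_count (prof E) (voters E) r)).
  { transitivity (INR (length (voters E')) *
      (INR (ballot_count (prof E') (voters E') r) / INR (length (voters E')))); [field; lra|].
    rewrite <- Hfreq. field. lra. }
  rewrite Hcount. ring.
Qed.

Lemma maxR_ballots_homog (H : list nat -> R) E E' :
  valid_election E -> valid_election E' -> homog E E' ->
  maxR (map (fun v => H (prof E' v)) (voters E')) =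
  maxR (map (fun v => H (prof E v)) (voters E)).
Proof.
  assert (Hle : forall E E', valid_election E -> valid_election E' -> homog E E' ->
    maxR (map (fun v => H (prof E v)) (voters E)) <=
    maxR (map (fun v => H (prof E' v)) (voters E'))).
  { intros E1 E2 hE1 hE2 hH. apply maxR_lub; [apply maxR_nonneg|].
    intros x Hx. apply in_map_iff in Hx as [v [<- Hv]].
    destruct (homog_ballot_cast E1 E2 v hE1 hE2 hH Hv) as [v' [Hv' Heq]].
    rewrite <- Heq. apply maxR_ub, in_map_iff. eauto. }
  intros hE hE' hH. apply Rle_antisym; apply Hle; auto using homog_sym.
Qed.

Lemma lp_norm_homog p E E' : valid_election E -> valid_election E' -> homog E E' ->
  exists c, 0 < c /\ forall h : list nat -> R,
    lp_norm p (map (fun v => h (prof E' v)) (voters E')) =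
    c * lp_norm p (map (fun v => h (prof E v)) (voters E)).
Proof.
  intros hE hE' hH. destruct p as [q|].
  - set (k := INR (length (voters E')) / INR (length (voters E))).
    assert (Hk : 0 < k)
      by (apply Rdiv_lt_0_compat; apply voters_length_pos; assumption).
    exists (rpow k (/ q)). split; [apply rpow_pos, Hk|].
    intros h. simpl. rewrite !map_map.
    rewrite (sumR_ballots_homog (fun r => rpow (Rabs (h r)) q) E E' hE hE' hH).
    apply rpow_mult; [exact Hk|]. apply sumR_nonneg. intros; apply rpow_nonneg.
  - exists 1. split; [lra|]. intros h. simpl. rewrite !map_map, Rmult_1_l.
    apply (maxR_ballots_homog (fun r => Rabs (h r))); assumption.
Qed.

Fixpoint lists_over (n : nat) (C : list nat) : list (list nat) :=
  match n with
  | O => [[]]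
  | S n => flat_map (fun x => map (cons x) (lists_over n C)) C
  end.

Lemma lists_over_In C σ : incl σ C -> In σ (lists_over (length σ) C).
Proof.
  induction σ as [|a σ IH]; simpl; intros H; [left; reflexivity|].
  apply incl_cons_inv in H as [Ha H].
  apply in_flat_map. exists a. split; [exact Ha | apply in_map, IH, H].
Qed.

Lemma exists_min_in_list {A} (W : list A) (P : A -> Prop) (f : A -> R) :
  (exists w, In w W /\ P w) -> exists w0, P w0 /\ forall w, In w W -> P w -> f w0 <= f w.
Proof.
  induction W as [|a W IH]; intros [w [Hw Pw]]; [contradiction|].
  destruct (classic (exists w, In w W /\ P w)) as [HW | HW].
  - destruct (IH HW) as [w0 [P0 Hmin]].
    destruct (classic (P a /\ f a < f w0)) as [[Pa Hlt] | Hnlt].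
    + exists a. split; [exact Pa|]. intros w1 [<-|Hw1] Pw1; [lra|].
      specialize (Hmin w1 Hw1 Pw1). lra.
    + exists w0. split; [exact P0|]. intros w1 [<-|Hw1] Pw1; [|auto].
      destruct (Rle_dec (f w0) (f a)); [assumption|].
      exfalso. apply Hnlt. split; [assumption | lra].
  - destruct Hw as [<-|Hw]; [|exfalso; eauto].
    exists a. split; [exact Pw|]. intros w1 [<-|Hw1] Pw1; [lra | exfalso; eauto].
Qed.

Definition completion (s : nat) (C r σ : list nat) : Prop :=
  is_ranking C σ /\ firstn s σ = r.

(* [Unam^s_r] contains an election with candidate set [C]. *)
Definition completable (s : nat) (C r : list nat) : Prop :=
  (s <= length C)%nat /\ exists σ, completion s C r σ.

Definition closest_completion (d : dist_family) (s : nat) (C r ρ : list nat) : list nat :=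
  epsilon (inhabits nil) (fun σ => completion s C r σ /\
     forall σ', completion s C r σ' -> d C ρ σ <= d C ρ σ').

(* The minimum exists because rankings of [C] are among the finitely many
   lists of length [|C|] over [C]. *)
Lemma closest_completion_spec d s C r ρ : (exists σ, completion s C r σ) ->
  completion s C r (closest_completion d s C r ρ) /\
  forall σ', completion s C r σ' -> d C ρ (closest_completion d s C r ρ) <= d C ρ σ'.
Proof.
  intros Hex. unfold closest_completion. apply epsilon_spec.
  assert (Hfin : forall σ, completion s C r σ -> In σ (lists_over (length C) C)).
  { intros σ [[_ Hperm] _]. rewrite <- (Permutation_length Hperm).
    apply lists_over_In. intros x Hx. eapply Permutation_in; eauto. }
  destruct Hex as [σ Hσ].
  destruct (exists_min_in_list (lists_over (length C) C) (completion s C r) (d C ρ))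
    as [σ0 [H0 Hmin]]; [eauto|].
  exists σ0. split; [exact H0|]. intros σ' Hσ'. apply Hmin; auto.
Qed.

Lemma votewise_nonneg d p E F : ER_le (Fin 0) (votewise d p E F).
Proof.
  unfold votewise. destruct (andb _ _); simpl; [apply lp_norm_nonneg | exact I].
Qed.

Lemma dist_to_nonneg D E A : (forall F, ER_le (Fin 0) (D E F)) -> ER_le (Fin 0) (dist_to D E A).
Proof. intros HD. apply ER_inf_nonneg. intros y [F [_ ->]]. apply HD. Qed.

Lemma dist_to_Unam_completable d p s r E :
  (forall q, p = Fin q -> 0 < q) ->
  (forall a b, is_ranking (cands E) a -> is_ranking (cands E) b -> 0 <= d (cands E) a b) ->
  valid_election E -> completable s (cands E) r ->
  dist_to (votewise d p) E (Unam s r) =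
  Fin (lp_norm p (map (fun v => d (cands E) (prof E v)
                          (closest_completion d s (cands E) r (prof E v))) (voters E))).
Proof.
  intros Hp Hd hE [Hs Hex]. apply ER_inf_glb.
  pose proof (fun ρ => closest_completion_spec d s (cands E) r ρ Hex) as Hbest.
  split.
  - intros y [F [(hF & _ & Htop) ->]]. unfold votewise.
    destruct (list_eqb (cands E) (cands F)) eqn:EC; simpl; [|exact I].
    destruct (list_eqb (voters E) (voters F)) eqn:EV; simpl; [|exact I].
    apply list_eqb_eq in EC, EV.
    apply lp_norm_le; [exact Hp|]. intros v Hv.
    destruct (Hbest (prof E v)) as [[Hrank _] Hmin]. split.
    + apply Hd; [apply hE, Hv | exact Hrank].
    + apply Hmin. rewrite EV in Hv. split; [rewrite EC; apply hF, Hv | apply Htop, Hv].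
  - intros z Hz.
    set (F := Election (cands E) (voters E)
                (fun v => closest_completion d s (cands E) r (prof E v))).
    assert (HF : Unam s r F).
    { destruct hE as (hC & hV & hN & _).
      split; [split; [|split; [|split]] | split]; simpl; try assumption;
        intros w _; apply Hbest. }
    specialize (Hz _ (ex_intro _ F (conj HF eq_refl))).
    unfold votewise in Hz. simpl in Hz. rewrite !list_eqb_refl in Hz. exact Hz.
Qed.

Lemma dist_to_Unam_not_completable d p s r E : ~ completable s (cands E) r ->
  dist_to (votewise d p) E (Unam s r) = PInf.
Proof.
  intros Hnc. apply ER_inf_glb. split; [|intros [] _; exact I].
  intros y [F [((_ & _ & HN & Hrank) & Hs & Htop) ->]]. unfold votewise.
  destruct (list_eqb (cands E) (cands F)) eqn:EC; simpl; [|exact I].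
  apply list_eqb_eq in EC. exfalso. apply Hnc. rewrite EC.
  destruct (voters F) as [|v V] eqn:EV; [congruence|].
  split; [exact Hs|]. exists (prof F v).
  split; [apply Hrank | apply Htop]; left; reflexivity.
Qed.

Lemma dist_to_Unam_homog d p s E E' :
  (forall q, p = Fin q -> 0 < q) ->
  (forall a b, is_ranking (cands E) a -> is_ranking (cands E) b -> 0 <= d (cands E) a b) ->
  valid_election E -> valid_election E' -> homog E E' ->
  exists c, 0 < c /\ forall r,
    dist_to (votewise d p) E' (Unam s r) = ER_scale c (dist_to (votewise d p) E (Unam s r)).
Proof.
  intros Hp Hd hE hE' hH.
  destruct (lp_norm_homog p E E' hE hE' hH) as [c [Hc Hnorm]].
  exists c. split; [exact Hc|]. intros r.
  pose proof hH as [HC _].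
  destruct (classic (completable s (cands E) r)) as [Hcomp | Hnc].
  - rewrite (dist_to_Unam_completable d p s r E), (dist_to_Unam_completable d p s r E');
      rewrite <- ?HC; try assumption.
    simpl. f_equal.
    apply (Hnorm (fun ρ => d (cands E) ρ (closest_completion d s (cands E) r ρ))).
  - rewrite (dist_to_Unam_not_completable d p s r E), (dist_to_Unam_not_completable d p s r E');
      rewrite <- ?HC; auto.
Qed.

Theorem corollary6p12 (s : nat) (p : ER) (d : dist_family)
  (hs : (1 <= s)%nat) (hp : ER_le (Fin 1) p)
  (hd : is_pseudo_dist_family d)
  (E E' : election) (hE : valid_election E) (hE' : valid_election E')
  (hH : homog E E') :
  forall r, R_Unam s (votewise d p) E r <-> R_Unam s (votewise d p) E' r.
Proof.
  assert (Hp : forall q, p = Fin q -> 0 < q) by (intros q ->; simpl in hp; lra).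
  assert (Hd : forall a b, is_ranking (cands E) a -> is_ranking (cands E) b ->
                 0 <= d (cands E) a b) by (apply hd, hE).
  destruct (dist_to_Unam_homog d p s E E' Hp Hd hE hE' hH) as [c [Hc Hscale]].
  intros r. apply and_iff_compat_l.
  apply (argmin_ER_scale (is_srank s) (fun r => dist_to (votewise d p) E (Unam s r))
           (fun r => dist_to (votewise d p) E' (Unam s r)) c r Hc); [|exact Hscale].
  intros r' _. apply dist_to_nonneg, votewise_nonneg.
Qed.
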